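(* Let $0<k<n$ be integers such that $s^{n,k}=\frac{n(n+1)}{2k}$ is an even integer. Let $\mathcal P=[p_1,\ldots,p_k]=[2^e,p^f,\ldots]$ be an ascending partition of $n$ of size $k$ with $e,f>0$ and $p\ge 3$; that is, $p_1=\cdots=p_e=2$, $p_{e+1}=\cdots=p_{e+f}=p$, and $p_i>p$ for all $i>e+f$. Let $c=s^{n,k}-n$, $C=\{x\in[n]:x\ge c\}$, $h=|C|-2e=2n-s^{n,k}+1-2e$, $m=s^{n,k}/2$, $\overline h=\lceil h/2\rceil$ and $\underline h=\lfloor h/2\rfloor$. Suppose that \[ m+\sum_{i=c-p+1}^{c-1} i < s^{n,k}, \] and define $g=h-f$ if $f\le \underline h$, and $g=\overline h-2(f-\underline h)$ if $f>\underline h$. If either (i) $g<0$, or (ii) $g\ge 0$ and, for $q=p_{e+f+g+1}$, $\sum_{i=c-q}^{c-1} i<s^{n,k}$, then $\mathcal P$ is non-equitable.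
   Context: $[n]=\{1,2,\ldots,n\}$. An ascending partition of $n$ of size $k$ is a sequence of positive integers $[p_1,\ldots,p_k]$ with $p_1\le\cdots\le p_k$ and $\sum_i p_i=n$. Such a partition is equitable if $[n]$ can be partitioned into sets $A_1,\dots,A_k$ with $|A_i|=p_i$ such that all the sums $\sum_{x\in A_i}x$ are equal (necessarily to $s^{n,k}$). The notation $[q_1^{e_1},q_2^{e_2},\ldots]$ with $q_1<q_2<\cdots$ means the ascending partition having exactly $e_i$ parts equal to $q_i$. *)

From mathcomp Require Import all_boot all_order all_algebra.
Set Implicit Arguments. Unset Strict Implicit. Unset Printing Implicit Defensive.
Import Order.TTheory GRing.Theory Num.Theory.

(* An ascending partition of n of size k: a sorted (nondecreasing) list of
   k positive integers with sum n.  Entry i (0-based) is p_{i+1}. *)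
Definition asc_partition (n k : nat) (P : seq nat) : Prop :=
  [/\ size P = k, sorted leq P, all (fun x => 0 < x) P & sumn P = n].

(* Equitable: [n] = {1..n} can be partitioned into sets A_1..A_k (given by a
   labelling f : x |-> block index < k) with |A_i| = p_i and all block sums
   equal. *)
Definition equitable (n : nat) (P : seq nat) : Prop :=
  exists f : nat -> nat,
    [/\ forall x, x \in iota 1 n -> f x < size P,
        forall i, i < size P -> count (fun x => f x == i) (iota 1 n) = nth 0 P i
      & forall i j, i < size P -> j < size P ->
          \sum_(x <- iota 1 n | f x == i) x = \sum_(x <- iota 1 n | f x == j) x].

(* s^{n,k} = n(n+1)/(2k) (used only when 2k divides n(n+1)). *)
Definition snk (n k : nat) : nat := (n * n.+1) %/ (2 * k).

Local Open Scope ring_scope.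

Definition isum (a b : int) : int :=
  if a <= b then \sum_(0 <= j < absz (b - a + 1)) (a + j%:Z) else 0.

(* ceiling and floor of h/2 for integers (divz is floor division for d > 0) *)
Definition floor2 (h : int) : int := (h %/ 2)%Z.
Definition ceil2 (h : int) : int := - ((- h) %/ 2)%Z.

From mathcomp Require Import all_boot all_order all_algebra zify.
Import Order.TTheory GRing.Theory Num.Theory.
Set Implicit Arguments. Unset Strict Implicit. Unset Printing Implicit Defensive.

(* Write s = 2m and c = s - n.  Every block has at least two elements and the
   p-blocks have three, so n > 2k and s = n(n+1)/(2k) > n + 1; hence
   C = [c, n] has 2(n - m) + 1 elements, n - m of which exceed m.  A 2-block
   {x, s - x} lies in C and has exactly one element above m.  By the hypothesis
   on m + (c-p+1) + ... + (c-1), every p-block B satisfies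
   |B /\ C| + |{x in B | x > m}| >= 2.  Counting the elements of C and
   those above m over all blocks leaves at most g elements of C for the blocks
   after the p-blocks.  So g >= 0, and one of the g + 1 blocks following the
   p-blocks misses C: its at most q elements are distinct and below c, so its
   sum is at most (c-q) + ... + (c-1) < s. *)

Lemma sum_iota1 n : 2 * \sum_(x <- iota 1 n) x = n * n.+1.
Proof.
elim: n => [|n IH]; first by rewrite big_nil.
by rewrite -[X in iota 1 X]addn1 iotaD big_cat big_seq1 mulnDr IH; lia.
Qed.

Lemma count_iota1_ge a n : 0 < a -> count (fun x => a <= x) (iota 1 n) = n.+1 - a.
Proof.
move=> a_gt0; elim: n => [|n IH]; first by rewrite /=; lia.
rewrite -[X in iota 1 X]addn1 iotaD count_cat IH /= addn0 add1n.
case: leqP; lia.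
Qed.

Lemma size_uniq_lt c B : uniq B -> all (fun x => x < c) B -> size B <= c.
Proof.
move=> uB ltB; rewrite -(size_iota 0 c).
by apply: uniq_leq_size => // x /(allP ltB); rewrite mem_iota.
Qed.

Lemma sumn_uniq_lt c q B : uniq B -> all (fun x => x < c) B -> size B <= q <= c ->
  2 * sumn B + q * q.+1 <= 2 * q * c.
Proof.
elim: c q B => [|c IH] q B uB ltB /andP[szB qc].
  by case: B ltB {uB szB} => [|x ? /andP[]] //=; lia.
have [cB|cB] := boolP (c \in B).
  rewrite (perm_sumn (perm_to_rem cB)) /=.
  have ltB' : all (fun x => x < c) (rem c B).
    apply/allP => x; rewrite mem_rem_uniq // inE => /andP[xc /(allP ltB)].
    by rewrite ltnS leq_eqVlt (negPf xc).
  have /andP/(IH _ _ (rem_uniq c uB) ltB') : size (rem c B) <= q - 1 /\ q - 1 <= c.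
    by rewrite size_rem //; lia.
  have : 0 < size B by rewrite -has_predT; apply/hasP; exists c.
  nia.
have ltB' : all (fun x => x < c) B.
  apply/allP => x xB; have := allP ltB x xB.
  by rewrite ltnS leq_eqVlt; case: eqP => // xc; rewrite -xc xB in cB.
have szBc := size_uniq_lt uB ltB'.
have /andP/(IH _ _ uB ltB') : size B <= minn q c /\ minn q c <= c by lia.
nia.
Qed.

Lemma pair_block_counts n M B : uniq B -> all (fun x => 0 < x <= n) B -> size B = 2 ->
  sumn B = 2 * M ->
  [/\ M < n, count (fun x => 2 * M - n <= x) B = 2 & count (fun x => M < x) B = 1].
Proof.
case: B => [|x [|y []]] //=; rewrite inE !andbT addn0 => xy /andP[xn yn] _ xyM.
have /eqP x_ne_y := xy.
by case: (ltngtP x y); split; case: leqP; case: ltnP; lia.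
Qed.

Lemma long_block_counts c0 M p B : uniq B -> size B = p -> sumn B = 2 * M -> c0 <= M ->
  2 * M + 2 * (p - 1) * c0 < 4 * M + (p - 1) * p ->
  2 <= count (fun x => c0 <= x) B + count (fun x => M < x) B.
Proof.
(* Otherwise no element exceeds M and at most one is >= c0, forcing a sum < 2M. *)
move=> uB szB sumB c0M sum_bound; rewrite leqNgt; apply/negP => lt2.
have above_le_inC : count (fun x => M < x) B <= count (fun x => c0 <= x) B.
  by apply: sub_count => x /=; lia.
set U := [seq x <- B | c0 <= x]; set L := [seq x <- B | predC (fun x => c0 <= x) x].
have /hasPn le_M : ~~ has (fun x => M < x) B by rewrite has_count; lia.
have szU : size U <= 1 by rewrite size_filter; lia.
have sumU : sumn U <= size U * M.
  case eqU: U szU => [|u [|//]] _ //=.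
  have : u \in U by rewrite eqU inE.
  by rewrite mem_filter => /andP[_ /le_M]; lia.
have UL_B : perm_eq (U ++ L) B := permEl (perm_filterC _ _).
have szUL : size U + size L = p by rewrite -szB -size_cat (perm_size UL_B).
have sumUL : sumn U + sumn L = 2 * M by rewrite -sumB -sumn_cat (perm_sumn UL_B).
have : 2 * sumn L + size L * (size L).+1 <= 2 * size L * c0.
  have ltL : all (fun x => x < c0) L.
    by apply/allP => x; rewrite mem_filter /= -ltnNge => /andP[].
  have uL : uniq L := filter_uniq _ uB.
  by rewrite sumn_uniq_lt // leqnn (size_uniq_lt uL ltL).
nia.
Qed.

Local Open Scope ring_scope.

Lemma double_sum_from (a : int) (q : nat) :
  2 * \sum_(0 <= j < q) (a + j%:Z) = 2 * q%:Z * a + q%:Z * (q%:Z - 1).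
Proof.
elim: q => [|q IH]; first by rewrite big_geq; lia.
rewrite big_nat_recr //= mulrDr IH; lia.
Qed.

Lemma double_isum_below (c : int) (q : nat) :
  2 * isum (c - q%:Z) (c - 1) = 2 * q%:Z * c - q%:Z * (q%:Z + 1).
Proof.
rewrite /isum; case: ifP => [le_q | /negbT q_lt]; last first.
  have -> : q = 0%N by lia.
  lia.
have -> : absz (c - 1 - (c - q%:Z) + 1) = q by lia.
rewrite double_sum_from; lia.
Qed.

Lemma floor2_odd (a : int) : floor2 (2 * a + 1) = a.
Proof. by rewrite /floor2 mulrC divzMDl // divz_small ?addr0. Qed.

Lemma ceil2_odd (a : int) : ceil2 (2 * a + 1) = a + 1.
Proof.
rewrite /ceil2 (_ : - (2 * a + 1) = (- a - 1) * 2 + 1); last by lia.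
by rewrite divzMDl // divz_small ?addr0 //; lia.
Qed.

Local Close Scope ring_scope.

Definition block (lab : nat -> nat) (r : seq nat) (i : nat) := [seq x <- r | lab x == i].

Section Blocks.

Variables (k : nat) (lab : nat -> nat) (r : seq nat).
Hypothesis lab_lt : {in r, forall x, lab x < k}.

Lemma sum_blocks (F : nat -> nat) :
  \sum_(i < k) \sum_(x <- block lab r i) F x = \sum_(x <- r) F x.
Proof.
rewrite (eq_bigr (fun i : 'I_k => \sum_(x <- r | lab x == i) F x)) => [|i _].
  2: exact: big_filter.
rewrite (exchange_big_dep predT) //=; apply: eq_big_seq => x /lab_lt x_lt_k.
by rewrite (big_pred1 (Ordinal x_lt_k)) // => i; rewrite eq_sym.
Qed.

Lemma count_blocks (a : pred nat) : \sum_(i < k) count a (block lab r i) = count a r.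
Proof.
rewrite -sumn_count sumnE big_map -sum_blocks.
by apply: eq_bigr => i _; rewrite -sumn_count sumnE big_map.
Qed.

Lemma sumn_blocks : \sum_(i < k) sumn (block lab r i) = sumn r.
Proof. by rewrite sumnE -sum_blocks; apply: eq_bigr => i _; rewrite sumnE. Qed.

Lemma equal_block_sums i :
  (forall j, j < k -> sumn (block lab r j) = sumn (block lab r i)) ->
  k * sumn (block lab r i) = sumn r.
Proof.
move=> eq_sum; rewrite -sumn_blocks (eq_bigr _ (fun (j : 'I_k) _ => eq_sum j (ltn_ord j))).
by rewrite sum_nat_const card_ord.
Qed.

End Blocks.

Lemma equitable_blocks n P : 0 < size P -> equitable n P ->
  exists lab : nat -> nat,
  [/\ {in iota 1 n, forall x, lab x < size P},
      forall i, i < size P -> size (block lab (iota 1 n) i) = nth 0 P i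
    & forall i, i < size P -> sumn (block lab (iota 1 n) i) = snk n (size P)].
Proof.
move=> P_gt0 [lab [lab_lt count_lab sum_lab]]; exists lab; split => // [i i_lt | i i_lt].
  by rewrite size_filter count_lab.
have eq_sum j : j < size P -> sumn (block lab (iota 1 n) j) = sumn (block lab (iota 1 n) i).
  by move=> j_lt; rewrite !sumnE !big_filter (sum_lab j i).
by rewrite /snk -sum_iota1 -sumnE -(equal_block_sums lab_lt eq_sum) mulnA mulKn ?muln_gt0.
Qed.

Lemma sum_nat_const_in m n a (F : nat -> nat) :
  (forall i, m <= i < n -> F i = a) -> \sum_(m <= i < n) F i = (n - m) * a.
Proof. by move=> eqF; rewrite (eq_big_nat _ _ eqF) sum_nat_const_nat. Qed.

Section NonEquitable.

Variables (n k e f p M : nat) (P : seq nat) (lab : nat -> nat).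

Hypotheses (P_size : size P = k) (P_sorted : sorted leq P) (P_sum : sumn P = n).
Hypotheses (e_gt0 : 0 < e) (f_gt0 : 0 < f) (p_gt2 : 2 < p).
Hypotheses (P_pair : forall i, i < e -> nth 0 P i = 2)
  (P_mid : forall i, e <= i < e + f -> nth 0 P i = p)
  (P_tail : forall i, e + f <= i < k -> p < nth 0 P i).

Local Notation B := (block lab (iota 1 n)).

Hypotheses (lab_lt : {in iota 1 n, forall x, lab x < k})
  (size_B : forall i, i < k -> size (B i) = nth 0 P i)
  (sumn_B : forall i, i < k -> sumn (B i) = 2 * M).

Lemma ef_le_k : e + f <= k.
Proof.
rewrite leqNgt; apply/negP => k_lt.
have /P_mid : e <= e + f - 1 < e + f by lia.
by rewrite nth_default ?P_size; lia.
Qed.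

Lemma sum_by_kind (F : nat -> nat) : \sum_(i < k) F i =
  \sum_(0 <= i < e) F i + \sum_(e <= i < e + f) F i + \sum_(e + f <= i < k) F i.
Proof.
have e_le_ef : e <= e + f := leq_addr f e.
rewrite -(big_mkord xpredT) (big_cat_nat (leq0n e) (leq_trans e_le_ef ef_le_k)).
by rewrite (big_cat_nat e_le_ef ef_le_k) /= addnA.
Qed.

Lemma n_split : n = 2 * e + p * f + \sum_(e + f <= i < k) nth 0 P i.
Proof.
rewrite -{1}P_sum sumnE (big_nth 0) P_size big_mkord sum_by_kind.
rewrite (sum_nat_const_in (a := 2)) => [|i /andP[_ /P_pair] //].
rewrite (sum_nat_const_in (a := p)) => [|i /P_mid //].
nia.
Qed.

Lemma tail_ge j : e + f <= j < k ->
  4 * (j - (e + f)) + nth 0 P j <= \sum_(e + f <= i < k) nth 0 P i.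
Proof.
move=> /andP[ef_j j_k].
rewrite (big_cat_nat ef_j (ltnW j_k)) (big_ltn j_k) /=.
have : \sum_(e + f <= i < j) 4 <= \sum_(e + f <= i < j) nth 0 P i.
  rewrite big_nat [X in _ <= X]big_nat; apply: leq_sum => i /andP[ef_i i_j].
  have /P_tail : e + f <= i < k by lia.
  lia.
rewrite sum_nat_const_nat; lia.
Qed.

Lemma double_k_lt_n : 2 * k < n.
Proof.
have := n_split; have := ef_le_k; have : 3 * f <= p * f by rewrite leq_mul2r p_gt2 orbT.
case: (ltnP (e + f) k) => [ef_k | k_ef].
  have /tail_ge : e + f <= k.-1 < k by lia.
  have /P_tail : e + f <= k.-1 < k by lia.
  lia.
by rewrite big_geq //; lia.
Qed.

Lemma uniq_B i : uniq (B i).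
Proof. exact/filter_uniq/iota_uniq. Qed.

Lemma B_range i : all (fun x => 0 < x <= n) (B i).
Proof. by apply/allP => x; rewrite mem_filter mem_iota => /andP[_]; lia. Qed.

Lemma four_kM_eq : 4 * k * M = n * n.+1.
Proof.
rewrite -sum_iota1 -sumnE -(sumn_blocks lab_lt).
rewrite (eq_bigr _ (fun (i : 'I_k) _ => sumn_B (ltn_ord i))) sum_nat_const card_ord.
lia.
Qed.

Lemma n_lt_2M : n.+1 < 2 * M.
Proof. have := four_kM_eq; have := double_k_lt_n; nia. Qed.

(* In the notation of the statement, M = m, c0 = c, [inC i] is the number of
   elements of block i in C and [above i] the number of those exceeding m. *)
Local Notation c0 := (2 * M - n).
Local Notation inC i := (count (fun x => c0 <= x) (B i)).
Local Notation above i := (count (fun x => M < x) (B i)).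

Lemma pair_counts i : i < e -> [/\ M < n, inC i = 2 & above i = 1].
Proof.
move=> i_e; have i_k : i < k by have := ef_le_k; lia.
by apply: pair_block_counts (uniq_B i) (B_range i) _ (sumn_B i_k); rewrite size_B // P_pair.
Qed.

Lemma M_lt_n : M < n.
Proof. by case: (pair_counts e_gt0). Qed.

Lemma above_le_inC i : above i <= inC i.
Proof. by apply: sub_count => x /=; have := M_lt_n; lia. Qed.

Lemma inC_split : 2 * e + \sum_(e <= i < e + f) inC i + \sum_(e + f <= i < k) inC i =
  2 * (n - M) + 1.
Proof.
have := count_blocks lab_lt (fun x => c0 <= x).
rewrite (sum_by_kind (fun i => inC i)) count_iota1_ge.
  rewrite (sum_nat_const_in (a := 2)) => [|i /andP[_ /pair_counts[] //]].
  by have := n_lt_2M; have := M_lt_n; lia.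
by have := n_lt_2M; lia.
Qed.

Lemma above_split : e + \sum_(e <= i < e + f) above i + \sum_(e + f <= i < k) above i =
  n - M.
Proof.
have := count_blocks lab_lt (fun x => M < x).
rewrite (sum_by_kind (fun i => above i)) count_iota1_ge //.
rewrite (sum_nat_const_in (a := 1)) => [|i /andP[_ /pair_counts[] //]].
lia.
Qed.

Lemma exists_tail_block_off_C G : e + f + G < k -> \sum_(e + f <= i < k) inC i <= G ->
  exists2 j, e + f <= j <= e + f + G & inC j = 0.
Proof.
move=> efG_k tail_le.
rewrite (big_cat_nat (leqW (leq_addr G (e + f))) efG_k) /= in tail_le.
set J := index_iota (e + f) (e + f + G).+1 in tail_le *.
have [/hasP[j] | /hasPn inC_pos] := boolP (has (fun j => inC j == 0) J).
  by rewrite mem_index_iota => j_range /eqP; exists j.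
have : \sum_(i <- J) 1 <= \sum_(i <- J) inC i.
  by rewrite big_seq [X in _ <= X]big_seq; apply: leq_sum => i /inC_pos; rewrite lt0n.
rewrite sum1_size size_iota; lia.
Qed.

Lemma tail_block_size_lt_c0 G : e + f + G < k -> \sum_(e + f <= i < k) inC i <= G ->
  nth 0 P (e + f + G) < c0.
Proof.
(* The blocks e + f, ..., e + f + G have at least 4G + q elements, at most G in C. *)
move=> efG_k tail_le.
have : \sum_(e <= i < e + f) inC i <= \sum_(e <= i < e + f) p.
  rewrite big_nat [X in _ <= X]big_nat; apply: leq_sum => i i_mid.
  by rewrite -(P_mid i_mid) -size_B ?count_size //; have := ef_le_k; lia.
have /tail_ge : e + f <= e + f + G < k by lia.
have := n_split; have := inC_split; have := n_lt_2M.
rewrite sum_nat_const_nat; lia.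
Qed.

Lemma tail_inC_gt G : e + f + G < k ->
  let q := nth 0 P (e + f + G) in 2 * q * c0 < 4 * M + q * q.+1 ->
  G < \sum_(e + f <= i < k) inC i.
Proof.
move=> efG_k q q_block_bound; rewrite ltnNge; apply/negP => tail_le.
have [j /andP[ef_j j_le] inC_j] := exists_tail_block_off_C efG_k tail_le.
have j_k : j < k by lia.
have below_c0 : all (fun x => x < c0) (B j).
  have : all (predC (fun x => c0 <= x)) (B j) by rewrite all_predC has_count inC_j.
  by apply: sub_all => x /=; rewrite ltnNge.
have size_le_q : size (B j) <= q.
  rewrite size_B //; apply: (sorted_leq_nth leq_trans leqnn) => //; rewrite inE P_size //.
have q_lt_c0 := tail_block_size_lt_c0 efG_k tail_le.
have /andP/(sumn_uniq_lt (uniq_B j) below_c0) : size (B j) <= q /\ q <= c0 by lia.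
rewrite sumn_B //; lia.
Qed.

Lemma mid_counts i : 2 * M + 2 * (p - 1) * c0 < 4 * M + (p - 1) * p ->
  e <= i < e + f -> 2 <= inC i + above i.
Proof.
move=> p_block_bound i_mid; have i_k : i < k by have := ef_le_k; lia.
apply: long_block_counts (uniq_B i) _ (sumn_B i_k) _ p_block_bound.
  by rewrite size_B // P_mid.
by have := M_lt_n; lia.
Qed.

Local Open Scope ring_scope.

Lemma tail_inC_le (a : int) : (2 * M + 2 * (p - 1) * c0 < 4 * M + (p - 1) * p)%N ->
  a = (n - M)%:Z - e%:Z ->
  (\sum_(e + f <= i < k) inC i)%:Z <=
  (if f%:Z <= a then 2 * a + 1 - f%:Z else a + 1 - 2 * (f%:Z - a)).
Proof.
(* The p-blocks hold at least f elements of C, and at least 2f - a of them since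
   only a elements above m remain for them. *)
move=> p_block_bound ->; have := inC_split; have := above_split.
have : (\sum_(e <= i < e + f) above i <= \sum_(e <= i < e + f) inC i)%N.
  by rewrite big_nat [X in (_ <= X)%N]big_nat; apply: leq_sum => i _; apply: above_le_inC.
have : (\sum_(e <= i < e + f) 2 <= \sum_(e <= i < e + f) (inC i + above i))%N.
  by rewrite big_nat [X in (_ <= X)%N]big_nat; apply: leq_sum => i; apply: mid_counts.
rewrite big_split sum_nat_const_nat /=.
by case: ifP; lia.
Qed.

Lemma labelled_partition_contradiction :
  let s := (2 * M)%:Z in let c := s - n%:Z in
  let h := (count (fun x : nat => c <= x%:Z) (iota 1 n))%:Z - 2 * e%:Z in
  M%:Z + isum (c - p%:Z + 1) (c - 1) < s ->
  let g := if f%:Z <= floor2 h then h - f%:Z else ceil2 h - 2 * (f%:Z - floor2 h) in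
  (g < 0 \/
   (0 <= g /\ (e + f + `|g| < k)%N /\
    let q := nth 0%N P (e + f + `|g|) in isum (c - q%:Z) (c - 1) < s)) -> False.
Proof.
move=> s c h p_bound.
have [n_lt M_lt] := (n_lt_2M, M_lt_n).
have c_c0 : c = c0%:Z by rewrite /c /s; lia.
set a := (n - M)%:Z - e%:Z.
have h_odd : h = 2 * a + 1.
  rewrite /h c_c0 (eq_count (a2 := fun x => c0 <= x)%N) => [|x]; last by rewrite lez_nat.
  by rewrite count_iota1_ge; lia.
have p_block_bound : (2 * M + 2 * (p - 1) * c0 < 4 * M + (p - 1) * p)%N.
  have := double_isum_below c0%:Z (p - 1).
  move: p_bound; rewrite c_c0 (_ : c0%:Z - p%:Z + 1 = c0%:Z - (p - 1)%N%:Z); lia.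
rewrite h_odd floor2_odd ceil2_odd c_c0 => g.
have tail_le : (\sum_(e + f <= i < k) inC i)%:Z <= g := tail_inC_le p_block_bound erefl.
case=> [g_lt0 | [g_ge0 [efG_k /= q_bound]]]; first lia.
set q := nth 0%N P _ in q_bound.
have q_bound' : (2 * q * c0 < 4 * M + q * q.+1)%N.
  by have := double_isum_below c0%:Z q; lia.
have := tail_inC_gt efG_k q_bound'; lia.
Qed.

End NonEquitable.

Local Open Scope ring_scope.

Theorem mainTheorem2 (n k : nat) (P : seq nat) (e f p : nat) :
  (0 < k)%N -> (k < n)%N ->
  (2 * k %| n * n.+1)%N -> ~~ odd (snk n k) ->
  asc_partition n k P ->
  (0 < e)%N -> (0 < f)%N -> (3 <= p)%N ->
  (forall i, (i < e)%N -> nth 0%N P i = 2%N) ->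
  (forall i, (e <= i < e + f)%N -> nth 0%N P i = p) ->
  (forall i, (e + f <= i < k)%N -> (p < nth 0%N P i)%N) ->
  let s : int := (snk n k)%:Z in
  let c : int := s - n%:Z in
  let h : int := (count (fun x : nat => c <= x%:Z) (iota 1 n))%:Z - 2 * e%:Z in
  let m : int := ((snk n k) %/ 2)%N%:Z in
  m + isum (c - p%:Z + 1) (c - 1) < s ->
  let g : int := if f%:Z <= floor2 h then h - f%:Z
                 else ceil2 h - 2 * (f%:Z - floor2 h) in
  (g < 0 \/
   (0 <= g /\ (e + f + absz g < k)%N /\
    let q := nth 0%N P (e + f + absz g) in
    isum (c - q%:Z) (c - 1) < s)) ->
  ~ equitable n P.
Proof.
move=> k_gt0 _ _ S_even [P_size P_sorted _ P_sum] e_gt0 f_gt0 p_ge3 P_pair P_mid P_tail.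
set M := (snk n k %/ 2)%N.
have S_2M : snk n k = (2 * M)%N.
  by rewrite /M divn2 mul2n -{1}(odd_double_half (snk n k)) (negbTE S_even).
rewrite S_2M => s c h m p_bound g g_cases /equitable_blocks[|lab [lab_lt size_B sumn_B]].
  by rewrite P_size.
rewrite P_size S_2M in lab_lt size_B sumn_B.
exact: (labelled_partition_contradiction P_size P_sorted P_sum e_gt0 f_gt0 p_ge3
  P_pair P_mid P_tail lab_lt size_B sumn_B p_bound g_cases).
Qed.
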